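(* Let $G=(V,E)$ be a connected graph on $n\ge 2$ vertices with maximum degree $\Delta$. (i) $\gamma^{DLD}(G)\le n-\beta_2(G)\le \left\lfloor n\left(1-\frac{1}{\Delta^2+1}\right)\right\rfloor$. (ii) If moreover $N(u)\not\subseteq N(v)$ for all distinct $u,v\in V$, then $\gamma^{DLD}(G)\le n-\beta(G)\le \left\lfloor n\left(1-\frac{1}{\Delta+1}\right)\right\rfloor$. (iii) If moreover $N(u)\not\subseteq N[v]$ for all distinct $u,v\in V$, then $\gamma^{SLD}(G)\le n-\beta(G)\le \left\lfloor n\left(1-\frac{1}{\Delta+1}\right)\right\rfloor$.
   Context: Graphs are finite, simple and undirected. For $u\in V$, $N(u)$ is the set of neighbours of $u$ and $N[u]=N(u)\cup\{u\}$; $d(u,v)$ is the distance. A code is a non-empty subset $C\subseteq V$; $I(C;u)=N[u]\cap C$. A code $C$ is self-locating-dominating if for every $u\in V\setminus C$ we have $I(C;u)\neq\emptyset$ and $\bigcap_{c\in I(C;u)}N[c]=\{u\}$. A code $C$ is solid-locating-dominating if $I(C;u)\ne\emptyset$ for every $u\in V\setminus C$ and $I(C;u)\not\subseteq I(C;v)$ for all distinct $u,v\in V\setminus C$. $\gamma^{SLD}(G)$, $\gamma^{DLD}(G)$ are the minimum sizes of such codes. $\beta(G)$ is the independence number of $G$. $\beta_2(G)$ is the maximum size of a set $S\subseteq V$ with $d(u,v)\ge 3$ for all distinct $u,v\in S$. *)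

From mathcomp Require Import all_boot all_order.
Set Implicit Arguments. Unset Strict Implicit. Unset Printing Implicit Defensive.

Section Graphs.
Variables (T : finType) (e : rel T).

Definition simple_graph : Prop := symmetric e /\ irreflexive e.
Definition connected_graph : Prop := forall x y : T, connect e x y.

Definition nbh (u : T) : {set T} := [set w | e u w].
Definition cnbh (u : T) : {set T} := u |: nbh u.

Definition max_degree : nat := \max_(v : T) #|nbh v|.

Definition Iset (C : {set T}) (u : T) : {set T} := cnbh u :&: C.

Definition self_locating_dominating (C : {set T}) : bool :=
  (C != set0) &&
  [forall u, (u \notin C) ==>
     ((Iset C u != set0) && (\bigcap_(c in Iset C u) cnbh c == [set u]))].

Definition solid_locating_dominating (C : {set T}) : bool :=
  (C != set0) &&
  [forall u, (u \notin C) ==> (Iset C u != set0)] &&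
  [forall u, forall v, ((u != v) && (u \notin C) && (v \notin C)) ==>
       ~~ (Iset C u \subset Iset C v)].

(* minimum sizes (the default #|T| is never reached when n >= 1, as V
   itself is such a code) *)
Definition gamma_SLD : nat :=
  \big[minn/#|T|]_(C : {set T} | self_locating_dominating C) #|C|.
Definition gamma_DLD : nat :=
  \big[minn/#|T|]_(C : {set T} | solid_locating_dominating C) #|C|.

Definition independent (S : {set T}) : bool :=
  [forall u in S, forall v in S, ~~ e u v].

Definition dist_ge3 (u v : T) : bool :=
  (u != v) && ~~ e u v && [forall w, ~~ (e u w && e w v)].

Definition packing2 (S : {set T}) : bool :=
  [forall u in S, forall v in S, (u != v) ==> dist_ge3 u v].

Definition beta : nat := \max_(S : {set T} | independent S) #|S|.
Definition beta2 : nat := \max_(S : {set T} | packing2 S) #|S|.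

End Graphs.

From mathcomp Require Import all_boot all_order zify.
Set Implicit Arguments. Unset Strict Implicit. Unset Printing Implicit Defensive.

(* If S is a maximum independent set (resp. 2-packing) then its closed
   neighbourhoods (resp. balls of radius 2) cover V, each has at most
   Δ + 1 (resp. Δ^2 + 1) vertices, whence the lower bounds on β and β2.
   Its complement V \ S is a code: every u ∈ S sees exactly N(u) in it,
   and N(u) is nonempty (no isolated vertices), so the hypothesis on
   nested neighbourhoods is exactly what separates vertices of S; for a
   2-packing the neighbourhoods of distinct vertices are even disjoint. *)

Lemma leq_card_bigcup (I T : finType) (P : pred I) (F : I -> {set T}) :
  #|\bigcup_(i | P i) F i| <= \sum_(i | P i) #|F i|.
Proof.
apply: (big_ind2 (fun (X : {set T}) n => #|X| <= n)) => [|A a B b leA leB|//].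
  by rewrite cards0.
by rewrite (leq_trans (leq_card_setU A B).1) ?leq_add.
Qed.

Lemma leq_card_covering (I T : finType) (S : {set I}) (B : I -> {set T}) m :
  (forall v, v \in \bigcup_(s in S) B s) -> (forall s, s \in S -> #|B s| <= m) ->
  #|T| <= #|S| * m.
Proof.
move=> cover leB; rewrite -cardsT.
have -> : [set: T] = \bigcup_(s in S) B s by apply/setP => v; rewrite inE cover.
by rewrite (leq_trans (leq_card_bigcup _ _)) // -sum_nat_const leq_sum.
Qed.

Lemma bigmax_card_attained (T : finType) (P : pred {set T}) :
  P set0 -> exists2 S, P S & \max_(A | P A) #|A| = #|S|.
Proof.
by move=> P0; rewrite (bigmax_eq_arg set0) //; case: arg_maxnP => // S PS _; exists S.
Qed.

Lemma bigmax_card_setU1 (T : finType) (P : pred {set T}) (S : {set T}) v :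
  \max_(A | P A) #|A| = #|S| -> v \notin S -> ~~ P (v |: S).
Proof.
move=> maxS vS; apply/negP => /(@leq_bigmax_cond _ _ (fun A : {set T} => #|A|)).
by rewrite maxS cardsU1 vS ltnn.
Qed.

Lemma leq_sub_divn n s k : n <= s * (k + 1) -> n - s <= n * k %/ (k + 1).
Proof. by move=> le_n; rewrite leq_divRL ?addn1 //; nia. Qed.

Lemma connected_no_isolated (T : finType) (e : rel T) :
  connected_graph e -> 1 < #|T| -> forall u, exists w, e u w.
Proof.
move=> conn T_gt1 u; have /card_gt0P[v] : 0 < #|[set~ u]| by rewrite cardsC1; lia.
rewrite in_setC1 => vu.
case/connectP: (conn u v) => [[|w p]] /=; first by move=> _ vE; rewrite vE eqxx in vu.
by case/andP=> euw _ _; exists w.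
Qed.

Section Codes.
Variables (T : finType) (e : rel T).
Hypotheses (e_sym : symmetric e) (e_irr : irreflexive e).

Lemma independentP (S : {set T}) :
  reflect {in S &, forall u v, ~~ e u v} (independent e S).
Proof.
apply: (iffP forall_inP) => [indS u v uS vS | indS u uS].
  exact: (forall_inP (indS u uS) v vS).
by apply/forall_inP => v; apply: indS.
Qed.

Lemma packing2P (S : {set T}) :
  reflect {in S &, forall u v, u != v -> dist_ge3 e u v} (packing2 e S).
Proof.
apply: (iffP forall_inP) => [packS u v uS vS | packS u uS].
  exact/implyP/(forall_inP (packS u uS) v vS).
by apply/forall_inP => v vS; apply/implyP/packS.
Qed.

Lemma dist_ge3_sym u v : dist_ge3 e u v = dist_ge3 e v u.
Proof.
rewrite /dist_ge3 [u == v]eq_sym [e u v]e_sym; congr (_ && _).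
by apply: eq_forallb => w; rewrite andbC !(e_sym w).
Qed.

Lemma packing2_independent S : packing2 e S -> independent e S.
Proof.
move/packing2P=> packS; apply/independentP => u v uS vS.
have [->|uv] := eqVneq u v; first by rewrite e_irr.
by case/andP: (packS u v uS vS uv) => /andP[].
Qed.

Lemma independent_setU1 S v :
  independent e S -> (forall s, s \in S -> ~~ e s v) -> independent e (v |: S).
Proof.
move=> /independentP indS nadj; apply/independentP.
move=> a b /setU1P[->|aS] /setU1P[->|bS].
- by rewrite e_irr.
- by rewrite e_sym nadj.
- exact: nadj.
- exact: indS.
Qed.

Lemma packing2_setU1 S v :
  packing2 e S -> (forall s, s \in S -> dist_ge3 e s v) -> packing2 e (v |: S).
Proof.
move=> /packing2P packS far; apply/packing2P.
move=> a b /setU1P[->|aS] /setU1P[->|bS]; rewrite ?eqxx // => ab.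
- by rewrite dist_ge3_sym far.
- exact: far.
- exact: packS.
Qed.

(* The vertices at distance at most 2 from s; removing s from each N[w]
   is what brings the size bound down to 1 + Δ·Δ. *)
Definition ball2 (s : T) : {set T} := s |: \bigcup_(w in nbh e s) (cnbh e w :\ s).

Lemma card_ball2 s : #|ball2 s| <= (max_degree e) ^ 2 + 1.
Proof.
rewrite cardsU1 addnC leq_add ?leq_b1 //; apply: leq_trans (leq_card_bigcup _ _) _.
apply: (@leq_trans (\sum_(w in nbh e s) max_degree e)).
  apply: leq_sum => w; rewrite inE => esw.
  have := cardsD1 s (cnbh e w); rewrite !inE e_sym esw orbT add1n => card_w.
  by rewrite -ltnS -card_w cardsU1 -add1n leq_add ?leq_b1 ?leq_bigmax.
by rewrite sum_nat_const expnS expn1 leq_mul2r leq_bigmax orbT.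
Qed.

Lemma notin_ball2 s v : v \notin ball2 s -> dist_ge3 e s v.
Proof.
rewrite in_setU1 negb_or eq_sym => /andP[sv far].
have path2 w : e s w -> v \in cnbh e w -> v = s.
  move=> esw vw; apply/eqP/negPn/negP => vs; apply: (negP far).
  by apply/bigcupP; exists w; [rewrite inE | rewrite in_setD1 vs vw].
rewrite /dist_ge3 sv; apply/andP; split.
  by apply/negP => esv; rewrite (path2 v esv) ?eqxx // in sv; rewrite !inE eqxx.
apply/forallP => w; apply/negP => /andP[esw ewv].
by rewrite (path2 w esw) ?eqxx // in sv; rewrite !inE ewv orbT.
Qed.

Lemma beta_attained : exists2 S, independent e S & beta e = #|S|.
Proof. by apply: bigmax_card_attained; apply/independentP => u; rewrite inE. Qed.

Lemma beta2_attained : exists2 S, packing2 e S & beta2 e = #|S|.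
Proof. by apply: bigmax_card_attained; apply/packing2P => u; rewrite inE. Qed.

Lemma beta_cover : #|T| <= beta e * (max_degree e + 1).
Proof.
have [S indS maxS] := beta_attained; rewrite maxS.
apply: (leq_card_covering (B := cnbh e)) => [v|s _]; last first.
  by rewrite /cnbh cardsU1 addnC leq_add ?leq_b1 ?leq_bigmax.
apply: contraT => uncovered.
have in_cnbh s : s \in S -> v \in cnbh e s -> False.
  by move=> sS vs; apply: (negP uncovered); apply/bigcupP; exists s.
have vS : v \notin S by apply/negP => vS; apply: (in_cnbh v vS); rewrite setU11.
have nadj s : s \in S -> ~~ e s v.
  by move=> sS; apply/negP => esv; apply: (in_cnbh s sS); rewrite !inE esv orbT.
by have := bigmax_card_setU1 maxS vS; rewrite independent_setU1.
Qed.

Lemma beta2_cover : #|T| <= beta2 e * ((max_degree e) ^ 2 + 1).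
Proof.
have [S packS maxS] := beta2_attained; rewrite maxS.
apply: (leq_card_covering (B := ball2)) => [v|s _]; last exact: card_ball2.
apply: contraT => uncovered.
have far s : s \in S -> dist_ge3 e s v.
  by move=> sS; apply: notin_ball2; apply: contra uncovered => vs; apply/bigcupP; exists s.
have vS : v \notin S by apply/negP => /far; rewrite /dist_ge3 eqxx.
by have := bigmax_card_setU1 maxS vS; rewrite packing2_setU1.
Qed.

Lemma Iset_setC_independent S u :
  independent e S -> u \in S -> Iset e (~: S) u = nbh e u.
Proof.
move=> /independentP indS uS; apply/setP => x; rewrite !inE.
have [->|_] := eqVneq x u; first by rewrite uS e_irr.
by case: (boolP (x \in S)) => xS; rewrite ?andbT // andbF (negbTE (indS u x uS xS)).
Qed.

Lemma gamma_DLD_leq C : solid_locating_dominating e C -> gamma_DLD e <= #|C|.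
Proof. exact: (@Order.TotalTheory.bigmin_le_cond _ nat). Qed.

Lemma gamma_SLD_leq C : self_locating_dominating e C -> gamma_SLD e <= #|C|.
Proof. exact: (@Order.TotalTheory.bigmin_le_cond _ nat). Qed.

Hypotheses (no_isolated : forall u, exists w, e u w) (T_gt0 : 0 < #|T|).

Lemma nbh_neq0 u : nbh e u != set0.
Proof. by have [w euw] := no_isolated u; apply/set0Pn; exists w; rewrite inE. Qed.

Lemma setC_independent_neq0 S : independent e S -> ~: S != set0.
Proof.
move=> /independentP indS; have /card_gt0P[u _] := T_gt0.
case: (boolP (u \in S)) => uS; last by apply/set0Pn; exists u; rewrite inE.
have [w euw] := no_isolated u; apply/set0Pn; exists w; rewrite inE.
by apply: contraL euw => wS; exact: indS.
Qed.

Lemma solid_locating_dominating_setC S :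
  independent e S -> {in S &, forall u v, u != v -> ~~ (nbh e u \subset nbh e v)} ->
  solid_locating_dominating e (~: S).
Proof.
move=> indS unnested; rewrite /solid_locating_dominating setC_independent_neq0 //=.
apply/andP; split; apply/forallP => u.
  by rewrite inE negbK; apply/implyP => uS; rewrite Iset_setC_independent ?nbh_neq0.
apply/forallP => v; rewrite !inE !negbK; apply/implyP => /andP[/andP[uv uS] vS].
by rewrite !Iset_setC_independent ?unnested.
Qed.

Lemma self_locating_dominating_setC S :
  independent e S -> (forall u v, u \in S -> u != v -> ~~ (nbh e u \subset cnbh e v)) ->
  self_locating_dominating e (~: S).
Proof.
move=> indS unnested; rewrite /self_locating_dominating setC_independent_neq0 //=.
apply/forall_inP => u; rewrite inE negbK => uS.
rewrite Iset_setC_independent // nbh_neq0; apply/eqP/setP => v; rewrite inE.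
have [->|vu] := eqVneq v u.
  by apply/bigcapP => c; rewrite !inE => euc; rewrite e_sym euc orbT.
apply/negbTE/negP => /bigcapP vcommon.
apply: (negP (unnested u v uS _)); first by rewrite eq_sym.
apply/subsetP => c uc; have := vcommon c uc; rewrite !inE in uc *.
by case/predU1P => [->|ecv]; rewrite ?eqxx // e_sym ecv orbT.
Qed.

Lemma packing2_unnested S :
  packing2 e S -> {in S &, forall u v, u != v -> ~~ (nbh e u \subset nbh e v)}.
Proof.
move=> /packing2P packS u v uS vS uv; have [w euw] := no_isolated u.
apply/negP => /subsetP/(_ w); rewrite !inE euw => /(_ isT) evw.
by case/andP: (packS u v uS vS uv) => _ /forallP/(_ w); rewrite euw e_sym evw.
Qed.

Lemma card_setC_sub (S : {set T}) : #|~: S| = #|T| - #|S|.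
Proof. by rewrite -(cardsC S) addKn. Qed.

Lemma gamma_DLD_leq_sub_beta2 : gamma_DLD e <= #|T| - beta2 e.
Proof.
have [S packS ->] := beta2_attained; rewrite -card_setC_sub.
apply/gamma_DLD_leq/solid_locating_dominating_setC.
  exact: packing2_independent.
exact: packing2_unnested.
Qed.

Lemma gamma_DLD_leq_sub_beta :
  (forall u v, u != v -> ~~ (nbh e u \subset nbh e v)) -> gamma_DLD e <= #|T| - beta e.
Proof.
move=> unnested; have [S indS ->] := beta_attained; rewrite -card_setC_sub.
by apply/gamma_DLD_leq/solid_locating_dominating_setC => // u v _ _; apply: unnested.
Qed.

Lemma gamma_SLD_leq_sub_beta :
  (forall u v, u != v -> ~~ (nbh e u \subset cnbh e v)) -> gamma_SLD e <= #|T| - beta e.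
Proof.
move=> unnested; have [S indS ->] := beta_attained; rewrite -card_setC_sub.
by apply/gamma_SLD_leq/self_locating_dominating_setC => // u v _; apply: unnested.
Qed.

End Codes.

Theorem mainTheorem8 (T : finType) (e : rel T) :
  simple_graph e -> connected_graph e -> 2 <= #|T| ->
  let n := #|T| in
  let D := max_degree e in
  [/\ gamma_DLD e <= n - beta2 e /\ n - beta2 e <= (n * D ^ 2) %/ (D ^ 2 + 1),
      (forall u v : T, u != v -> ~~ (nbh e u \subset nbh e v)) ->
        gamma_DLD e <= n - beta e /\ n - beta e <= (n * D) %/ (D + 1)
    & (forall u v : T, u != v -> ~~ (nbh e u \subset cnbh e v)) ->
        gamma_SLD e <= n - beta e /\ n - beta e <= (n * D) %/ (D + 1)].
Proof.
move=> [e_sym e_irr] conn T_gt1 n D.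
have no_isolated := connected_no_isolated conn T_gt1.
have T_gt0 : 0 < #|T| by apply: ltnW.
have beta_bound := leq_sub_divn (beta_cover e_sym e_irr).
split=> [|unnested|unnested]; split=> //.
- exact: gamma_DLD_leq_sub_beta2.
- exact/leq_sub_divn/beta2_cover.
- exact: gamma_DLD_leq_sub_beta.
- exact: gamma_SLD_leq_sub_beta.
Qed.
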